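(* Suppose the polymer model with edge weights $R^1,R^2,(Y^1,Y^2)$ possesses the down-right property. Then for all $(m,n)\in\mathbb{Z}_+^2$: (a) $\mathbb{E}[\log Z_{m,n}]=m\,\mathbb{E}[\log R^1]+n\,\mathbb{E}[\log R^2]$; (b) $\mathrm{Var}[\log Z_{m,n}]=-m\,\mathrm{Var}[\log R^1]+n\,\mathrm{Var}[\log R^2]+2\,\mathrm{Cov}(S_N,S_S)$; (c) $\mathrm{Var}[\log Z_{m,n}]=m\,\mathrm{Var}[\log R^1]-n\,\mathrm{Var}[\log R^2]+2\,\mathrm{Cov}(S_E,S_W)$, where \[ S_N=\log Z_{m,n}-\log Z_{0,n}=\sum_{i=1}^m\log R^1_{i,n},\quad S_S=\log Z_{m,0}=\sum_{i=1}^m\log R^1_{i,0}, \] \[ S_E=\log Z_{m,n}-\log Z_{m,0}=\sum_{j=1}^n\log R^2_{m,j},\quad S_W=\log Z_{0,n}=\sum_{j=1}^n\log R^2_{0,j}. \]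
   Context: Polymer model with edge weights $R^1,R^2,(Y^1,Y^2)$: the edges of $\mathbb{Z}_+^2$ carry positive random weights. For $z\in\mathbb{N}^2$, $Y^1_z$ is the weight of the horizontal edge $\{z-(1,0),z\}$ and $Y^2_z$ of the vertical edge $\{z-(0,1),z\}$; the pairs $(Y^1_z,Y^2_z)$ are i.i.d. with the law of $(Y^1,Y^2)$. For $i\in\mathbb{N}$ the edge $\{(i-1,0),(i,0)\}$ carries $R^1_{i,0}$, and for $j\in\mathbb{N}$ the edge $\{(0,j-1),(0,j)\}$ carries $R^2_{0,j}$; these are i.i.d. with laws of $R^1$, resp. $R^2$; the three collections are mutually independent. $Z_x$ is the sum over up-right paths from $(0,0)$ to $x$ of the product of the edge weights along the path, $Z_{0,0}=1$. With $\alpha_1=(1,0)$, $\alpha_2=(0,1)$, define $R^k_x:=Z_x/Z_{x-\alpha_k}$ for $k=1,2$ and all $x$ with $x-\alpha_k\in\mathbb{Z}_+^2$. A down-right path is a sequence $\pi=(\pi_k)_{k\in\mathbb{Z}}$ in $\mathbb{Z}_+^2$ with $\pi_{k+1}-\pi_k\in\{\alpha_1,-\alpha_2\}$. To the edge $\{\pi_{k-1},\pi_k\}$ associate $R^1_{\pi_k}$ if horizontal and $R^2_{\pi_{k-1}}$ if vertical. The model has the down-right property if for every down-right path $\pi$ the associated random variables are independent and each $R^1_{\pi_k}$, resp. $R^2_{\pi_k}$, in the collection is distributed as $R^1$, resp. $R^2$. *)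

From HB Require Import structures.
From mathcomp Require Import all_boot all_order all_algebra.
From mathcomp Require Import all_classical all_reals all_analysis.
Set Implicit Arguments. Unset Strict Implicit. Unset Printing Implicit Defensive.
Import Order.TTheory GRing.Theory Num.Theory.
Local Open Scope classical_set_scope.
Local Open Scope ring_scope.

Definition rv_events {d d'} {T : measurableType d} {T' : measurableType d'}
  (X : T -> T') : set (set T) := [set X @^-1` B | B in measurable].

Definition indep_family {d} {T : measurableType d} {R : realType}
  (P : probability T R) (I : Type) (E : I -> set (set T)) : Prop :=
  forall (n : nat) (f : 'I_n -> I) (A : 'I_n -> set T),
    injective f -> (forall k, E (f k) (A k)) ->
    P (\bigcap_k A k) = (\big[*%E/1%E]_(k < n) P (A k))%E.

Definition same_law {d d'} {T : measurableType d} {T' : measurableType d'}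
  {R : realType} (P : probability T R) (X Y : T -> T') : Prop :=
  forall B : set T', measurable B -> P (X @^-1` B) = P (Y @^-1` B).

Section polymer.
Context {d} {T : measurableType d} {R : realType}.
Variables (R1 R2 : nat -> T -> R) (Y1 Y2 : nat -> nat -> T -> R).
(* R1 i = R^1_{i,0} (i >= 1), R2 j = R^2_{0,j} (j >= 1),
   Y1 i j = Y^1_{(i,j)}, Y2 i j = Y^2_{(i,j)} (i, j >= 1). *)

(* weight of the horizontal edge {(a-1,b),(a,b)} *)
Definition hweight (a b : nat) : T -> R := if b == 0%N then R1 a else Y1 a b.
(* weight of the vertical edge {(a,b-1),(a,b)} *)
Definition vweight (a b : nat) : T -> R := if a == 0%N then R2 b else Y2 a b.

(* an up-right path from (0,0) is encoded by its sequence of steps,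
   true = vertical step (+alpha_2), false = horizontal step (+alpha_1) *)
Definition path_pos (N : nat) (s : N.-tuple bool) (k : nat) : nat * nat :=
  (count negb (take k s), count id (take k s)).

Definition step_weight (N : nat) (s : N.-tuple bool) (k : nat) : T -> R :=
  let p := path_pos s k.+1 in
  if nth false s k then vweight p.1 p.2 else hweight p.1 p.2.

Definition Zpf (m n : nat) : T -> R := fun w =>
  \sum_(s : (m + n).-tuple bool | count id s == n)
    \prod_(k < m + n) step_weight s k w.

Definition Rhat1 (x : nat * nat) : T -> R :=
  fun w => Zpf x.1 x.2 w / Zpf x.1.-1 x.2 w.
Definition Rhat2 (x : nat * nat) : T -> R :=
  fun w => Zpf x.1 x.2 w / Zpf x.1 x.2.-1 w.

Definition down_right_path (pi : int -> nat * nat) : Prop :=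
  forall k : int, pi (k + 1) = ((pi k).1.+1, (pi k).2)
               \/ ((pi (k + 1)).1 = (pi k).1 /\ (pi k).2 = (pi (k + 1)).2.+1).

Definition dr_horizontal (pi : int -> nat * nat) (k : int) : bool :=
  (pi k).2 == (pi (k - 1)).2.

Definition dr_var (pi : int -> nat * nat) (k : int) : T -> R :=
  if dr_horizontal pi k then Rhat1 (pi k) else Rhat2 (pi (k - 1)).

(* down-right property; the laws of R^1 and R^2 are those of R^1_{1,0}
   and R^2_{0,1} *)
Definition down_right_property (P : probability T R) : Prop :=
  forall pi, down_right_path pi ->
    indep_family P (fun k : int => rv_events (dr_var pi k)) /\
    (forall k : int, same_law P (dr_var pi k)
                       (if dr_horizontal pi k then R1 1%N else R2 1%N)).

Definition polymer_model (P : probability T R) : Prop :=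
  [/\ (forall i w, (0 < i)%N -> 0 < R1 i w),
      (forall j w, (0 < j)%N -> 0 < R2 j w),
      (forall i j w, (0 < i)%N -> (0 < j)%N -> 0 < Y1 i j w /\ 0 < Y2 i j w),
      [/\ (forall i, measurable_fun setT (R1 i)), (forall j, measurable_fun setT (R2 j)) &
          (forall i j, measurable_fun setT (Y1 i j) /\ measurable_fun setT (Y2 i j))] &
  [/\
      (forall i, (0 < i)%N -> same_law P (R1 i) (R1 1%N)),
      (forall j, (0 < j)%N -> same_law P (R2 j) (R2 1%N)),
      (forall i j, (0 < i)%N -> (0 < j)%N ->
          same_law P (fun w => (Y1 i j w, Y2 i j w)) (fun w => (Y1 1%N 1%N w, Y2 1%N 1%N w))) &
      indep_family P (fun x : (nat + nat) + (nat * nat) =>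
        match x with
        | inl (inl i) => rv_events (R1 i.+1)
        | inl (inr j) => rv_events (R2 j.+1)
        | inr (i, j) => rv_events (fun w => (Y1 i.+1 j.+1 w, Y2 i.+1 j.+1 w))
        end)]].

Definition lnZ (m n : nat) : T -> R := fun w => ln (Zpf m n w).

End polymer.

(* Fix a corner (m, n) and take the down-right path that comes down the y-axis
   to (0, n), runs east to (m, n), down to (m, 0) and then east along the
   x-axis.  The down-right property makes the logarithms of the variables on
   its edges independent, each distributed as ln R^1 or ln R^2.  Since
   R^k_x = Z_x / Z_(x - alpha_k), the logarithms telescope:
   S_N = ln Z_(m,n) - ln Z_(0,n) and S_E = ln Z_(m,n) - ln Z_(m,0) are sums of
   m, resp. n, of them along the top and the east side, and S_S, S_W are the
   same sums for the corners (m, 0) and (0, n).  Hence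
   ln Z_(m,n) = S_N + S_W = S_S + S_E with S_N, S_E independent, which gives
   the mean; expanding Var(S_N + S_W) and substituting
   Cov(S_N, S_S) = Var S_N + Cov(S_N, S_W) (from S_S = S_N + S_W - S_E) gives
   the first variance formula, and the second is symmetric. *)

From HB Require Import structures.
From mathcomp Require Import all_boot all_order all_algebra.
From mathcomp Require Import all_classical all_reals all_analysis.
From mathcomp Require Import measurable_realfun.
From mathcomp Require Import ring lra zify.
Import Order.TTheory GRing.Theory Num.Theory.
Local Open Scope classical_set_scope.
Local Open Scope ring_scope.
Set Implicit Arguments. Unset Strict Implicit. Unset Printing Implicit Defensive.

Section same_law.
Context {d} {T : measurableType d} {R : realType} (P : probability T R).
Local Open Scope ereal_scope.
Implicit Types X Y : T -> R.

Lemma same_law_comp X Y (g : R -> R) : measurable_fun setT g ->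
  same_law P X Y -> same_law P (g \o X) (g \o Y).
Proof.
move=> mg XY B mB; apply: (XY (g @^-1` B)).
by rewrite -[_ @^-1` _]setTI; exact: mg.
Qed.

Lemma same_law_ge0_integral X Y (h : R -> \bar R) :
  measurable_fun setT X -> measurable_fun setT Y -> same_law P X Y ->
  measurable_fun setT h -> (forall y, 0 <= h y) ->
  \int[P]_x h (X x) = \int[P]_x h (Y x).
Proof.
move=> mX mY XY mh h0.
have := ge0_integral_pushforward mX P measurableT mh (fun y _ => h0 y).
have := ge0_integral_pushforward mY P measurableT mh (fun y _ => h0 y).
rewrite !preimage_setT => <- <-.
by apply: eq_measure_integral => A mA _; exact: XY.
Qed.

Lemma same_law_expectation X Y :
  measurable_fun setT X -> measurable_fun setT Y -> same_law P X Y ->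
  'E_P[X] = 'E_P[Y].
Proof.
move=> mX mY XY.
have mE : measurable_fun [set: R] (EFin : R -> \bar R) by exact/measurable_EFinP.
rewrite unlock integralE [in RHS]integralE.
congr (_ - _).
- rewrite (eq_integral (fun x => EFin^\+ (X x))) => [|x _]; last by rewrite !funeposE.
  rewrite [RHS](eq_integral (fun x => EFin^\+ (Y x))) => [|x _]; last by rewrite !funeposE.
  exact: (same_law_ge0_integral mX mY XY (measurable_funepos mE) (funepos_ge0 _)).
- rewrite (eq_integral (fun x => EFin^\- (X x))) => [|x _]; last by rewrite !funenegE.
  rewrite [RHS](eq_integral (fun x => EFin^\- (Y x))) => [|x _]; last by rewrite !funenegE.
  exact: (same_law_ge0_integral mX mY XY (measurable_funeneg mE) (funeneg_ge0 _)).
Qed.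

Lemma same_law_Lfun X Y (p : R) :
  measurable_fun setT X -> measurable_fun setT Y -> same_law P X Y ->
  Y \in Lfun P p%:E -> X \in Lfun P p%:E.
Proof.
move=> mX mY XY /andP[_]; rewrite !inE /finite_norm => Yfin.
apply/andP; split; first by rewrite inE.
rewrite inE /finite_norm; move: Yfin; rewrite unlock /=.
rewrite (@same_law_ge0_integral X Y (fun y => `|y%:E| `^ p)) // => [|y].
  exact: measurableT_comp (measurable_poweR p) (measurableT_comp _ _).
exact: poweR_ge0.
Qed.

Lemma same_law_variance X Y :
  measurable_fun setT X -> measurable_fun setT Y -> same_law P X Y ->
  'V_P[X] = 'V_P[Y].
Proof.
move=> mX mY XY; rewrite /variance unlock (same_law_expectation mX mY XY).
set c := fine _; pose g y := ((y - c) * (y - c))%R.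
have mg : measurable_fun [set: R] g by apply: measurable_funM; apply: measurable_funB.
have := same_law_expectation (measurableT_comp mg mX) (measurableT_comp mg mY)
  (same_law_comp mg XY).
by rewrite unlock.
Qed.

End same_law.

Definition indep_rv {d} {T : measurableType d} {R : realType} (P : probability T R)
    (X Y : T -> R) : Prop :=
  forall A B : set R, measurable A -> measurable B ->
  P (X @^-1` A `&` Y @^-1` B) = (P (X @^-1` A) * P (Y @^-1` B))%E.

Section indep_rv.
Context {d} {T : measurableType d} {R : realType} (P : probability T R).
Local Open Scope ereal_scope.

Lemma indep_family_indep_rv (I : Type) (X : I -> T -> R) (g : R -> R) (i j : I) :
  measurable_fun setT g -> indep_family P (fun k => rv_events (X k)) -> i <> j ->
  indep_rv P (g \o X i) (g \o X j).
Proof.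
move=> mg indX ij A B mA mB.
have mgpre C : measurable C -> measurable (g @^-1` C).
  by move=> mC; rewrite -[_ @^-1` _]setTI; exact: mg.
pose f (k : 'I_2) : I := if k == ord0 then i else j.
pose E (k : 'I_2) := if k == ord0 then (g \o X i) @^-1` A else (g \o X j) @^-1` B.
have f_inj : injective f.
  move=> [[|[|k]] hk] [[|[|l]] hl] //= fkl; first [exact: val_inj | by case: ij].
have EX k : rv_events (X (f k)) (E k).
  case: k => [[|[|k]] hk] //=; rewrite /E /f /=.
  - by exists (g @^-1` A); [exact: mgpre|].
  - by exists (g @^-1` B); [exact: mgpre|].
have := indX 2%N f E f_inj EX.
rewrite !big_ord_recr big_ord0 /= mul1e => <-; congr (P _).
apply/seteqP; split => w.
- by move=> [EAw EBw] [[|[|k]] hk].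
- by move=> Ew; split; [move: (Ew ord0 Logic.I) | move: (Ew (lift ord0 ord0) Logic.I)].
Qed.

Section expectationM.
Variables (X Y : T -> R).
Hypotheses (mX : measurable_fun setT X) (mY : measurable_fun setT Y).
Let XY w := (X w, Y w).
Let mXY : measurable_fun setT XY. Proof. exact: measurable_fun_pair. Qed.
HB.instance Definition _ := isMeasurableFun.Build _ _ _ _ X mX.
HB.instance Definition _ := isMeasurableFun.Build _ _ _ _ Y mY.
HB.instance Definition _ := isMeasurableFun.Build _ _ _ _ XY mXY.

Let integrable_distribution (Z : {mfun T >-> R}) : (Z : T -> R) \in Lfun P 1 ->
  (distribution P Z).-integrable setT EFin /\
  \int[distribution P Z]_y y%:E = 'E_P[Z].
Proof.
move=> /Lfun1_integrable iZ; split; last by rewrite unlock integral_distribution.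
apply/integrableP; split; first exact/measurable_EFinP.
rewrite ge0_integral_distribution //; first by case/integrableP: iZ.
exact: measurableT_comp.
Qed.

Lemma indep_rv_expectationM : indep_rv P X Y ->
  X \in Lfun P 2%:E -> Y \in Lfun P 2%:E -> 'E_P[X * Y]%R = 'E_P[X] * 'E_P[Y].
Proof.
move=> iXY X2 Y2.
have Pfin : P setT \is a fin_num := fin_num_measure P _ measurableT.
have [iY EY] := integrable_distribution (Lfun_subset12 Pfin Y2).
have [iX EX] := integrable_distribution (Lfun_subset12 Pfin X2).
have /Lfun1_integrable iXY1 := Lfun2_mul_Lfun1 X2 Y2.
pose f (z : R * R) := (z.1 * z.2)%:E.
have mf : measurable_fun setT f.
  by apply/measurable_EFinP; apply: measurable_funM; [exact: measurable_fst|exact: measurable_snd].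
(* independence says that the joint law is the product of the marginal laws *)
have prodE C : measurable C ->
    (distribution P X \x distribution P Y) C = distribution P XY C.
  by apply: product_measure_unique => A' B' mA' mB'; exact: iXY.
have EXYE : 'E_P[X * Y]%R = \int[distribution P XY]_z f z.
  by rewrite unlock integral_distribution.
have intf : (distribution P X \x distribution P Y).-integrable setT f.
  apply/integrableP; split => //.
  rewrite (eq_measure_integral (distribution P XY)) => [|C mC _]; last exact: prodE.
  rewrite ge0_integral_distribution //; first by case/integrableP: iXY1.
  exact: measurableT_comp.
rewrite EXYE (eq_measure_integral (distribution P X \x distribution P Y)) => [|C mC _];
  last exact/esym/prodE.
rewrite -(integral12_prod_meas1 intf) /fubini_F.
under eq_integral => x _ do rewrite /f /= (integralZl measurableT iY) EY.
have EYfin : 'E_P[Y] \is a fin_num by exact/expectation_fin_num/Lfun_subset12.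
by rewrite -(fineK EYfin) (integralZr measurableT iX) EX fineK.
Qed.

End expectationM.

Lemma indep_rv_covariance (X Y : T -> R) :
  measurable_fun setT X -> measurable_fun setT Y -> indep_rv P X Y ->
  X \in Lfun P 2%:E -> Y \in Lfun P 2%:E -> covariance P X Y = 0.
Proof.
move=> mX mY iXY X2 Y2.
have Pfin : P setT \is a fin_num := fin_num_measure P _ measurableT.
have [X1 Y1] := (Lfun_subset12 Pfin X2, Lfun_subset12 Pfin Y2).
rewrite covarianceE ?Lfun2_mul_Lfun1 // indep_rv_expectationM // subee //.
by rewrite fin_numM ?expectation_fin_num.
Qed.

End indep_rv.

Section sums.
Context {d} {T : measurableType d} {R : realType} (P : probability T R).
Local Open Scope ereal_scope.

Lemma sume_const (I : finType) (x : \bar R) : x \is a fin_num ->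
  \sum_(i : I) x = #|I|%:R%:E * x.
Proof. by move=> xf; rewrite -(fineK xf) sumEFin sumr_const -EFinM mulr_natl. Qed.

Lemma Lfun2_sum (I : Type) (r : seq I) (X : I -> T -> R) :
  (forall i, X i \in Lfun P 2%:E) -> (\sum_(i <- r) X i)%R \in Lfun P 2%:E.
Proof. by move=> X2; rewrite rpred_sum ?lee1n. Qed.

Lemma covariance_suml (I : Type) (r : seq I) (X : I -> T -> R) (Y : T -> R) :
  (forall i, X i \in Lfun P 2%:E) -> Y \in Lfun P 2%:E ->
  covariance P (\sum_(i <- r) X i)%R Y = \sum_(i <- r) covariance P (X i) Y.
Proof.
move=> X2 Y2; elim: r => [|i r IH].
  by rewrite !big_nil -[0%R]/(cst 0%R : T -> R) covariance_cst_l.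
by rewrite !big_cons covarianceDl ?IH ?Lfun2_sum.
Qed.

Lemma covariance_sumr (I : Type) (r : seq I) (X : T -> R) (Y : I -> T -> R) :
  X \in Lfun P 2%:E -> (forall i, Y i \in Lfun P 2%:E) ->
  covariance P X (\sum_(i <- r) Y i)%R = \sum_(i <- r) covariance P X (Y i).
Proof.
move=> X2 Y2; rewrite covarianceC covariance_suml //.
by apply: eq_bigr => i _; rewrite covarianceC.
Qed.

Lemma covariance_sum_eq0 (I J : Type) (r : seq I) (s : seq J)
    (X : I -> T -> R) (Y : J -> T -> R) :
  (forall i, X i \in Lfun P 2%:E) -> (forall j, Y j \in Lfun P 2%:E) ->
  (forall i j, covariance P (X i) (Y j) = 0) ->
  covariance P (\sum_(i <- r) X i)%R (\sum_(j <- s) Y j)%R = 0.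
Proof.
move=> X2 Y2 XY0; rewrite covariance_suml ?Lfun2_sum //.
by rewrite big1 // => i _; rewrite covariance_sumr // big1.
Qed.

Lemma variance_sum (I : finType) (X : I -> T -> R) :
  (forall i, X i \in Lfun P 2%:E) ->
  (forall i j, i != j -> covariance P (X i) (X j) = 0) ->
  'V_P[\sum_i X i]%R = \sum_i 'V_P[X i].
Proof.
move=> X2 X0; rewrite /variance covariance_suml ?Lfun2_sum //.
apply: eq_bigr => i _; rewrite covariance_sumr // (bigD1 i) //= big1 ?adde0 //.
by move=> j ji; apply: X0; rewrite eq_sym.
Qed.

Lemma variance_exchange (A B C E : T -> R) :
  A \in Lfun P 2%:E -> B \in Lfun P 2%:E -> C \in Lfun P 2%:E -> E \in Lfun P 2%:E ->
  (A \+ E = C \+ B)%R -> covariance P A B = 0 ->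
  'V_P[A \+ E]%R = 'V_P[E] - 'V_P[A] + 2%:E * covariance P A C.
Proof.
move=> A2 B2 C2 E2 AECB AB0.
have Pfin : P setT \is a fin_num := fin_num_measure P _ measurableT.
have cov_fin X Y : X \in Lfun P 2%:E -> Y \in Lfun P 2%:E -> covariance P X Y \is a fin_num.
  by move=> X2 Y2; rewrite covariance_fin_num ?Lfun2_mul_Lfun1 ?Lfun_subset12.
have -> : C = (A \+ E \- B)%R.
  by apply/funext => w; move/(congr1 (fun f => f w)): AECB => /=; lra.
rewrite varianceD // covarianceBr ?rpredD ?lee1n // covarianceDr // AB0 sube0.
rewrite -/('V_P[A]) -(fineK (variance_fin_num A2)) -(fineK (variance_fin_num E2)).
rewrite -(fineK (cov_fin _ _ A2 E2)).
by rewrite -EFinN -!EFinD; congr EFin; ring.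
Qed.

End sums.

Section partition_function.
Context {d} {T : measurableType d} {R : realType}.
Variables (R1 R2 : nat -> T -> R) (Y1 Y2 : nat -> nat -> T -> R).
Hypotheses (R1_gt0 : forall i w, (0 < i)%N -> 0 < R1 i w)
  (R2_gt0 : forall j w, (0 < j)%N -> 0 < R2 j w)
  (Y_gt0 : forall i j w, (0 < i)%N -> (0 < j)%N -> 0 < Y1 i j w /\ 0 < Y2 i j w).
Hypotheses (mR1 : forall i, measurable_fun setT (R1 i))
  (mR2 : forall j, measurable_fun setT (R2 j))
  (mY : forall i j, measurable_fun setT (Y1 i j) /\ measurable_fun setT (Y2 i j)).

Local Notation Zpf := (Zpf R1 R2 Y1 Y2).
Local Notation lnZ := (lnZ R1 R2 Y1 Y2).
Local Notation Rhat1 := (Rhat1 R1 R2 Y1 Y2).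
Local Notation Rhat2 := (Rhat2 R1 R2 Y1 Y2).

Lemma hweight_gt0 a b w : (0 < a)%N -> 0 < hweight R1 Y1 a b w.
Proof.
move=> a0; rewrite /hweight; case: eqP => [_|/eqP]; first exact: R1_gt0.
by rewrite -lt0n => b0; case: (Y_gt0 w a0 b0).
Qed.

Lemma vweight_gt0 a b w : (0 < b)%N -> 0 < vweight R2 Y2 a b w.
Proof.
move=> b0; rewrite /vweight; case: eqP => [_|/eqP]; first exact: R2_gt0.
by rewrite -lt0n => a0; case: (Y_gt0 w a0 b0).
Qed.

Lemma step_weight_gt0 N (s : N.-tuple bool) k w : (k < N)%N ->
  0 < step_weight R1 R2 Y1 Y2 s k w.
Proof.
move=> kN; rewrite /step_weight /path_pos.
rewrite (take_nth false (_ : k < size s)%N) ?size_tuple // -cats1 !count_cat /=.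
by case: nth; rewrite /= ?addn0 ?addn1; [exact: vweight_gt0 | exact: hweight_gt0].
Qed.

Lemma Zpf_gt0 m n w : 0 < Zpf m n w.
Proof.
pose s0 := cat_tuple (nseq_tuple m false) (nseq_tuple n true).
have s0n : count id s0 == n by rewrite count_cat !count_nseq mul0n mul1n.
rewrite /Zpf (bigD1 s0) //=; apply: ltr_wpDr.
  by apply/sumr_ge0 => s _; apply/prodr_ge0 => k _; exact/ltW/step_weight_gt0.
by apply: prodr_gt0 => k _; exact: step_weight_gt0.
Qed.

Lemma lnZ00 w : lnZ 0 0 w = 0.
Proof.
rewrite /lnZ /Zpf (big_pred1 [tuple]) => [|s]; last by rewrite (tuple0 s).
by rewrite big_ord0 ln1.
Qed.

Lemma ln_Rhat1 x w : ln (Rhat1 x w) = lnZ x.1 x.2 w - lnZ x.1.-1 x.2 w.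
Proof. by rewrite /Rhat1 lnM ?lnV ?posrE ?invr_gt0 ?Zpf_gt0. Qed.

Lemma ln_Rhat2 x w : ln (Rhat2 x w) = lnZ x.1 x.2 w - lnZ x.1 x.2.-1 w.
Proof. by rewrite /Rhat2 lnM ?lnV ?posrE ?invr_gt0 ?Zpf_gt0. Qed.

Lemma lnZ_sub_row m n w :
  lnZ m n w - lnZ 0 n w = \sum_(i < m) ln (Rhat1 (i.+1, n) w).
Proof.
under eq_bigr do rewrite ln_Rhat1.
by rewrite -(big_mkord xpredT (fun i => lnZ i.+1 n w - lnZ i n w)) telescope_sumr.
Qed.

Lemma lnZ_sub_column m n w :
  lnZ m n w - lnZ m 0 w = \sum_(j < n) ln (Rhat2 (m, j.+1) w).
Proof.
under eq_bigr do rewrite ln_Rhat2.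
by rewrite -(big_mkord xpredT (fun j => lnZ m j.+1 w - lnZ m j w)) telescope_sumr.
Qed.

Lemma measurable_lnZ m n : measurable_fun setT (lnZ m n).
Proof.
apply: measurableT_comp (@measurable_ln R) _; rewrite /Zpf.
under eq_fun do rewrite big_mkcond; apply: measurable_sum => s.
case: (count id s == n); last exact: measurable_cst.
apply: measurable_prod => k _; rewrite /step_weight /vweight /hweight.
by case: nth; case: eqP => _ //; case: (mY (path_pos s k.+1).1 (path_pos s k.+1).2).
Qed.

Lemma measurable_ln_dr_var pi k :
  measurable_fun setT (fun w => ln (dr_var R1 R2 Y1 Y2 pi k w)).
Proof.
rewrite /dr_var; case: ifP => _.
- by under eq_fun do rewrite ln_Rhat1; apply: measurable_funB; exact: measurable_lnZ.
- by under eq_fun do rewrite ln_Rhat2; apply: measurable_funB; exact: measurable_lnZ.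
Qed.

End partition_function.

Definition corner_path (m n : nat) (k : int) : nat * nat :=
  match k with
  | Posz k => if k <= m then (k, n) else if k <= m + n then (m, m + n - k) else (k - n, 0)
  | Negz k => (0, n + k.+1)
  end%N.

Lemma corner_path_down_right m n : down_right_path (corner_path m n).
Proof.
case=> [k|[|k]]; last 2 first.
- by right; split => /=; lia.
- have -> : (Negz k.+1 + 1)%R = Negz k by rewrite !NegzE; lia.
  by right; split => /=; lia.
have -> : (Posz k + 1)%R = k.+1 by lia.
rewrite /corner_path; (repeat case: ifP => ?) => /=.
all: by [left; congr (_, _); lia | right; split; lia].
Qed.

Lemma corner_path_row m n i : (i <= m)%N -> corner_path m n i = (i, n).
Proof. by move=> im /=; rewrite im. Qed.

Lemma corner_path_column m n j : (j <= n)%N ->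
  corner_path m n (m + n - j)%N = (m, j).
Proof. by move=> jn /=; case: ifP => h; rewrite ?leq_subr; congr (_, _); lia. Qed.

Section corner_path_edges.
Context {d} {T : measurableType d} {R : realType}.
Variables (R1 R2 : nat -> T -> R) (Y1 Y2 : nat -> nat -> T -> R).
Local Notation dr_var := (dr_var R1 R2 Y1 Y2).

Lemma dr_var_corner_row m n i : (i < m)%N ->
  dr_horizontal (corner_path m n) i.+1 /\
  dr_var (corner_path m n) i.+1 = Rhat1 R1 R2 Y1 Y2 (i.+1, n).
Proof.
move=> im; rewrite /dr_var /dr_horizontal.
have -> : (i.+1%:Z - 1)%R = i by lia.
by rewrite !corner_path_row ?eqxx // ltnW.
Qed.

Lemma dr_var_corner_column m n j : (j < n)%N ->
  ~~ dr_horizontal (corner_path m n) (m + n - j)%N /\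
  dr_var (corner_path m n) (m + n - j)%N = Rhat2 R1 R2 Y1 Y2 (m, j.+1).
Proof.
move=> jn; rewrite /dr_var /dr_horizontal.
have -> : ((m + n - j)%N%:Z - 1)%R = (m + n - j.+1)%N by lia.
by rewrite !corner_path_column ?(ltnW jn) //= (ltn_eqF (ltnSn j)).
Qed.

End corner_path_edges.

Section corner_sums.
Context {d} {T : measurableType d} {R : realType}.
Variables (R1 R2 : nat -> T -> R) (Y1 Y2 : nat -> nat -> T -> R).
Hypotheses (R1_gt0 : forall i w, (0 < i)%N -> 0 < R1 i w)
  (R2_gt0 : forall j w, (0 < j)%N -> 0 < R2 j w)
  (Y_gt0 : forall i j w, (0 < i)%N -> (0 < j)%N -> 0 < Y1 i j w /\ 0 < Y2 i j w).

Local Notation lnZ := (lnZ R1 R2 Y1 Y2).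
Local Notation ln_dr_var pi k := (fun w => ln (dr_var R1 R2 Y1 Y2 pi k w)).

Definition corner_row_sum m n : T -> R :=
  \sum_(i < m) ln_dr_var (corner_path m n) i.+1.

Definition corner_column_sum m n : T -> R :=
  \sum_(j < n) ln_dr_var (corner_path m n) (m + n - j)%N.

Lemma lnZ_sub_corner_row m n :
  (fun w => lnZ m n w - lnZ 0 n w) = corner_row_sum m n.
Proof.
apply/funext => w; rewrite lnZ_sub_row // /corner_row_sum fct_sumE.
by apply: eq_bigr => i _; case: (dr_var_corner_row R1 R2 Y1 Y2 n (ltn_ord i)) => _ ->.
Qed.

Lemma lnZ_sub_corner_column m n :
  (fun w => lnZ m n w - lnZ m 0 w) = corner_column_sum m n.
Proof.
apply/funext => w; rewrite lnZ_sub_column // /corner_column_sum fct_sumE.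
by apply: eq_bigr => j _; case: (dr_var_corner_column R1 R2 Y1 Y2 m (ltn_ord j)) => _ ->.
Qed.

Lemma lnZ_corner_row m : lnZ m 0 = corner_row_sum m 0.
Proof.
by rewrite -lnZ_sub_corner_row; apply/funext => w; rewrite lnZ00 // subr0.
Qed.

Lemma lnZ_corner_column n : lnZ 0 n = corner_column_sum 0 n.
Proof.
by rewrite -lnZ_sub_corner_column; apply/funext => w; rewrite lnZ00 // subr0.
Qed.

Lemma lnZ_north_west m n : lnZ m n = (corner_row_sum m n \+ corner_column_sum 0 n)%R.
Proof.
rewrite -lnZ_sub_corner_row -lnZ_corner_column.
by apply/funext => w /=; rewrite subrK.
Qed.

Lemma lnZ_south_east m n : lnZ m n = (corner_column_sum m n \+ corner_row_sum m 0)%R.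
Proof.
rewrite -lnZ_sub_corner_column -lnZ_corner_row.
by apply/funext => w /=; rewrite subrK.
Qed.

End corner_sums.

Section down_right_sums.
Context {d} {T : measurableType d} {R : realType} (P : probability T R).
Variables (R1 R2 : nat -> T -> R) (Y1 Y2 : nat -> nat -> T -> R).
Hypotheses (R1_gt0 : forall i w, (0 < i)%N -> 0 < R1 i w)
  (R2_gt0 : forall j w, (0 < j)%N -> 0 < R2 j w)
  (Y_gt0 : forall i j w, (0 < i)%N -> (0 < j)%N -> 0 < Y1 i j w /\ 0 < Y2 i j w).
Hypotheses (mR1 : forall i, measurable_fun setT (R1 i))
  (mR2 : forall j, measurable_fun setT (R2 j))
  (mY : forall i j, measurable_fun setT (Y1 i j) /\ measurable_fun setT (Y2 i j)).
Hypothesis dr_prop : down_right_property R1 R2 Y1 Y2 P.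
Hypotheses (lnR1_L2 : (fun w => ln (R1 1%N w)) \in Lfun P 2%:E)
  (lnR2_L2 : (fun w => ln (R2 1%N w)) \in Lfun P 2%:E).

Local Notation ln_dr_var pi k := (fun w => ln (dr_var R1 R2 Y1 Y2 pi k w)).
Local Notation ln_weight b := (fun w => ln ((if b then R1 1%N else R2 1%N) w)).
Local Open Scope ereal_scope.

Let mln_dr_var pi k : measurable_fun setT (ln_dr_var pi k).
Proof. exact: measurable_ln_dr_var. Qed.

Let mln_weight b : measurable_fun setT (ln_weight b).
Proof. by apply: measurableT_comp (@measurable_ln R) _; case: b. Qed.

Let ln_weight_L2 b : ln_weight b \in Lfun P 2%:E.
Proof. by case: b. Qed.

Lemma same_law_ln_dr_var pi k : down_right_path pi ->
  same_law P (ln_dr_var pi k) (ln_weight (dr_horizontal pi k)).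
Proof.
move=> dr_pi; apply: (same_law_comp (@measurable_ln R)).
by case: (dr_prop dr_pi) => _; apply.
Qed.

Lemma ln_dr_var_L2 pi k : down_right_path pi -> ln_dr_var pi k \in Lfun P 2%:E.
Proof.
move=> dr_pi; apply: (same_law_Lfun _ _ (same_law_ln_dr_var k dr_pi)).
- exact: mln_dr_var.
- exact: mln_weight.
- exact: ln_weight_L2.
Qed.

Lemma covariance_ln_dr_var pi k l : down_right_path pi -> k != l ->
  covariance P (ln_dr_var pi k) (ln_dr_var pi l) = 0.
Proof.
move=> dr_pi /eqP kl; apply: indep_rv_covariance.
- exact: mln_dr_var.
- exact: mln_dr_var.
- exact: (indep_family_indep_rv (@measurable_ln R) (dr_prop dr_pi).1 kl).
- exact: ln_dr_var_L2.
- exact: ln_dr_var_L2.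
Qed.

Section fixed_path.
Variables (pi : int -> nat * nat) (dr_pi : down_right_path pi).

Lemma expectation_sum_ln_dr_var (I : finType) (k : I -> int) b :
  (forall i, dr_horizontal pi (k i) = b) ->
  'E_P[\sum_i ln_dr_var pi (k i)]%R = #|I|%:R%:E * 'E_P[ln_weight b].
Proof.
move=> kb; have Pfin : P setT \is a fin_num := fin_num_measure P _ measurableT.
have := @expectation_sum _ _ _ P (map (fun i => ln_dr_var pi (k i)) (index_enum I)).
rewrite !big_map => -> => [|_ /mapP[i _ ->]]; last exact/Lfun_subset12/ln_dr_var_L2.
rewrite -sume_const; last exact/expectation_fin_num/Lfun_subset12.
apply: eq_bigr => i _; rewrite -(kb i); apply: same_law_expectation (same_law_ln_dr_var _ dr_pi).
- exact: mln_dr_var.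
- exact: mln_weight.
Qed.

Lemma variance_sum_ln_dr_var (I : finType) (k : I -> int) b : injective k ->
  (forall i, dr_horizontal pi (k i) = b) ->
  'V_P[\sum_i ln_dr_var pi (k i)]%R = #|I|%:R%:E * 'V_P[ln_weight b].
Proof.
move=> k_inj kb; rewrite variance_sum => [|i|i j ij]; last 2 first.
- exact: ln_dr_var_L2.
- by apply: covariance_ln_dr_var; rewrite // (inj_eq k_inj).
rewrite -sume_const; last exact: variance_fin_num.
apply: eq_bigr => i _; rewrite -(kb i); apply: same_law_variance (same_law_ln_dr_var _ dr_pi).
- exact: mln_dr_var.
- exact: mln_weight.
Qed.

Lemma covariance_sum_ln_dr_var (I J : finType) (k : I -> int) (l : J -> int) :
  (forall i j, k i != l j) ->
  covariance P (\sum_i ln_dr_var pi (k i))%R (\sum_j ln_dr_var pi (l j))%R = 0.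
Proof.
move=> kl; apply: covariance_sum_eq0 => [i|j|i j]; try exact: ln_dr_var_L2.
exact: covariance_ln_dr_var.
Qed.

End fixed_path.

Local Notation row_sum := (corner_row_sum R1 R2 Y1 Y2).
Local Notation column_sum := (corner_column_sum R1 R2 Y1 Y2).
Local Notation lnZ := (lnZ R1 R2 Y1 Y2).

Let row_horizontal m n (i : 'I_m) : dr_horizontal (corner_path m n) i.+1 = true.
Proof. by case: (dr_var_corner_row R1 R2 Y1 Y2 n (ltn_ord i)). Qed.

Let column_vertical m n (j : 'I_n) :
  dr_horizontal (corner_path m n) (m + n - j)%N = false.
Proof. by case: (dr_var_corner_column R1 R2 Y1 Y2 m (ltn_ord j)) => /negbTE. Qed.

Lemma corner_row_sum_L2 m n : row_sum m n \in Lfun P 2%:E.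
Proof. by apply: Lfun2_sum => i; exact/ln_dr_var_L2/corner_path_down_right. Qed.

Lemma corner_column_sum_L2 m n : column_sum m n \in Lfun P 2%:E.
Proof. by apply: Lfun2_sum => j; exact/ln_dr_var_L2/corner_path_down_right. Qed.

Lemma expectation_corner_row_sum m n :
  'E_P[row_sum m n] = m%:R%:E * 'E_P[fun w => ln (R1 1%N w)].
Proof.
rewrite -[m in m%:R%:E]card_ord.
exact: (expectation_sum_ln_dr_var (corner_path_down_right m n) (row_horizontal n)).
Qed.

Lemma expectation_corner_column_sum m n :
  'E_P[column_sum m n] = n%:R%:E * 'E_P[fun w => ln (R2 1%N w)].
Proof.
rewrite -[n in n%:R%:E]card_ord.
exact: (expectation_sum_ln_dr_var (corner_path_down_right m n) (@column_vertical m n)).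
Qed.

Lemma variance_corner_row_sum m n :
  'V_P[row_sum m n] = m%:R%:E * 'V_P[fun w => ln (R1 1%N w)].
Proof.
rewrite -[m in m%:R%:E]card_ord.
apply: (variance_sum_ln_dr_var (corner_path_down_right m n) _ (row_horizontal n)).
by move=> i j [] /val_inj.
Qed.

Lemma variance_corner_column_sum m n :
  'V_P[column_sum m n] = n%:R%:E * 'V_P[fun w => ln (R2 1%N w)].
Proof.
rewrite -[n in n%:R%:E]card_ord.
apply: (variance_sum_ln_dr_var (corner_path_down_right m n) _ (@column_vertical m n)).
by move=> i j [] ij; apply/val_inj; move: (ltn_ord i) (ltn_ord j) => /=; lia.
Qed.

Lemma covariance_corner_row_column m n :
  covariance P (row_sum m n) (column_sum m n) = 0.
Proof.
apply: (covariance_sum_ln_dr_var (corner_path_down_right m n)) => i j.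
by apply/eqP => -[]; move: (ltn_ord i) (ltn_ord j); lia.
Qed.

Lemma expectation_lnZ m n :
  'E_P[lnZ m n] = m%:R%:E * 'E_P[fun w => ln (R1 1%N w)]
                + n%:R%:E * 'E_P[fun w => ln (R2 1%N w)].
Proof.
have Pfin : P setT \is a fin_num := fin_num_measure P _ measurableT.
rewrite lnZ_north_west // expectationD ?Lfun_subset12 ?corner_row_sum_L2 ?corner_column_sum_L2 //.
by rewrite expectation_corner_row_sum expectation_corner_column_sum.
Qed.

Lemma variance_lnZ_row m n :
  'V_P[lnZ m n] = - (m%:R%:E * 'V_P[fun w => ln (R1 1%N w)])
                  + n%:R%:E * 'V_P[fun w => ln (R2 1%N w)]
                  + 2%:E * covariance P (fun w => lnZ m n w - lnZ 0 n w)%R (lnZ m 0).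
Proof.
rewrite lnZ_sub_corner_row // lnZ_corner_row // lnZ_north_west //.
rewrite (variance_exchange _ (corner_column_sum_L2 m n) (corner_row_sum_L2 m 0))
  ?corner_row_sum_L2 ?corner_column_sum_L2 ?covariance_corner_row_column //.
  by rewrite variance_corner_row_sum variance_corner_column_sum [X in X + _]addeC.
by rewrite -lnZ_north_west // lnZ_south_east //; apply/funext => w /=; rewrite addrC.
Qed.

Lemma variance_lnZ_column m n :
  'V_P[lnZ m n] = m%:R%:E * 'V_P[fun w => ln (R1 1%N w)]
                  - n%:R%:E * 'V_P[fun w => ln (R2 1%N w)]
                  + 2%:E * covariance P (fun w => lnZ m n w - lnZ m 0 w)%R (lnZ 0 n).
Proof.
rewrite lnZ_sub_corner_column // lnZ_corner_column // lnZ_south_east //.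
rewrite (variance_exchange _ (corner_row_sum_L2 m n) (corner_column_sum_L2 0 n))
  ?corner_row_sum_L2 ?corner_column_sum_L2 //.
- by rewrite variance_corner_row_sum variance_corner_column_sum.
- by rewrite -lnZ_south_east // lnZ_north_west //; apply/funext => w /=; rewrite addrC.
- by rewrite covarianceC covariance_corner_row_column.
Qed.

End down_right_sums.

Theorem lemma2p4 (d : measure_display) (T : measurableType d) (R : realType)
  (P : probability T R) (R1 R2 : nat -> T -> R) (Y1 Y2 : nat -> nat -> T -> R) :
  polymer_model R1 R2 Y1 Y2 P ->
  (fun w => ln (R1 1%N w)) \in Lfun P 2%:E ->
  (fun w => ln (R2 1%N w)) \in Lfun P 2%:E ->
  down_right_property R1 R2 Y1 Y2 P ->
  forall m n : nat,
    let logZ := lnZ R1 R2 Y1 Y2 in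
    let SN := fun w => logZ m n w - logZ 0%N n w in
    let SS := logZ m 0%N in
    let SE := fun w => logZ m n w - logZ m 0%N w in
    let SW := logZ 0%N n in
    [/\ ('E_P[logZ m n] = m%:R%:E * 'E_P[fun w => ln (R1 1%N w)]
                        + n%:R%:E * 'E_P[fun w => ln (R2 1%N w)])%E,
        (variance P (logZ m n) =
           - (m%:R%:E * variance P (fun w => ln (R1 1%N w)))
           + n%:R%:E * variance P (fun w => ln (R2 1%N w))
           + 2%:E * covariance P SN SS)%E &
        (variance P (logZ m n) =
           m%:R%:E * variance P (fun w => ln (R1 1%N w))
           - n%:R%:E * variance P (fun w => ln (R2 1%N w))
           + 2%:E * covariance P SE SW)%E].
Proof.
case=> [R1_gt0 R2_gt0 Y_gt0 [mR1 mR2 mY] _] lnR1_L2 lnR2_L2 dr_prop m n logZ SN SS SE SW.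
split.
- by apply: expectation_lnZ.
- by apply: variance_lnZ_row.
- by apply: variance_lnZ_column.
Qed.
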